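(* In the $\mathbf N$-agent system with class-wise distributions described in the context, let $\{\bar{\boldsymbol\mu}_t^{\mathbf N},\bar{\boldsymbol\nu}_t^{\mathbf N}\}_{t\ge0}$ be the collections of class-wise empirical state and action distributions induced by a policy $\bar{\boldsymbol\pi}=\{\bar{\boldsymbol\pi}_t\}_{t\ge0}$. Then for every $t\ge0$: (a) $\mathbb E|\bar{\boldsymbol\nu}_t^{\mathbf N}-\bar\nu^{\mathrm{MF}}(\bar{\boldsymbol\mu}_t^{\mathbf N},\bar{\boldsymbol\pi}_t)|_1\le\big(\sum_{k\in[K]}\frac1{\sqrt{N_k}}\big)\sqrt{|\mathcal U|}$; (b) $\mathbb E\Big|\frac1{N_{\mathrm{pop}}}\sum_{k\in[K]}\sum_{j=1}^{N_k}\bar r_k(x_{j,k}^t,u_{j,k}^t,\bar{\boldsymbol\mu}_t^{\mathbf N},\bar{\boldsymbol\nu}_t^{\mathbf N})-\sum_{k\in[K]}\theta_k\bar r_k^{\mathrm{MF}}(\bar{\boldsymbol\mu}_t^{\mathbf N},\bar{\boldsymbol\pi}_t)\Big|\le\bar C_R\big(\sum_{k}\frac1{\sqrt{N_k}}\big)\sqrt{|\mathcal U|}$; (c) $\mathbb E|\bar{\boldsymbol\mu}_{t+1}^{\mathbf N}-\bar P^{\mathrm{MF}}(\bar{\boldsymbol\mu}_t^{\mathbf N},\bar{\boldsymbol\pi}_t)|_1\le\bar C_P\big(\sum_k\frac1{\sqrt{N_k}}\big)\sqrt{|\mathcal X||\mathcal U|}$, where $\bar C_R=\bar M_R+\bar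 L_R$ and $\bar C_P=2+K\bar L_P$.
   Context: Fix $K\ge1$, $N_1,\dots,N_K\ge1$, $[K]=\{1,\dots,K\}$, $N_{\mathrm{pop}}=\sum_kN_k$, $\theta_k=N_k/N_{\mathrm{pop}}$, finite sets $\mathcal X,\mathcal U$. $\mathcal P(A)$ is the set of probability distributions on $A$; $\mathcal P^K(A)=\mathcal P(A)^K$ with elements written $\bar{\boldsymbol\mu}(\cdot,k)$ and $|\bar{\boldsymbol\mu}|_1=\sum_k\sum_a|\bar{\boldsymbol\mu}(a,k)|$. Agent $j\in[N_k]$ of class $k$ has state $x_{j,k}^t$ and action $u_{j,k}^t$; $\bar{\boldsymbol\mu}_t^{\mathbf N}(x,k)=\frac1{N_k}\sum_{j=1}^{N_k}\mathbf 1(x_{j,k}^t=x)$, $\bar{\boldsymbol\nu}_t^{\mathbf N}(u,k)=\frac1{N_k}\sum_{j=1}^{N_k}\mathbf 1(u_{j,k}^t=u)$. Constants $\bar M_R,\bar L_R,\bar L_P>0$. For each $k$: $\bar r_k:\mathcal X\times\mathcal U\times\mathcal P^K(\mathcal X)\times\mathcal P^K(\mathcal U)\to\mathbb R$, $\bar P_k:\mathcal X\times\mathcal U\times\mathcal P^K(\mathcal X)\times\mathcal P^K(\mathcal U)\to\mathcal P(\mathcal X)$ with $|\bar r_k|\le\bar M_R$, $|\bar r_k(x,u,\bar{\boldsymbol\mu}_1,\bar{\boldsymbol\nu}_1)-\bar r_k(x,u,\bar{\boldsymbol\mu}_2,\bar{\boldsymbol\nu}_2)|\le\bar L_R(|\bar{\boldsymbol\mu}_1-\bar{\boldsymbol\mu}_2|_1+|\bar{\boldsymbol\nu}_1-\bar{\boldsymbol\nu}_2|_1)$,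 $|\bar P_k(x,u,\bar{\boldsymbol\mu}_1,\bar{\boldsymbol\nu}_1)-\bar P_k(x,u,\bar{\boldsymbol\mu}_2,\bar{\boldsymbol\nu}_2)|_1\le\bar L_P(|\bar{\boldsymbol\mu}_1-\bar{\boldsymbol\mu}_2|_1+|\bar{\boldsymbol\nu}_1-\bar{\boldsymbol\nu}_2|_1)$. A policy is $\bar{\boldsymbol\pi}=\{\bar{\boldsymbol\pi}_t\}_{t\ge0}$, $\bar{\boldsymbol\pi}_t=(\bar\pi_k^t)_k$, $\bar\pi_k^t:\mathcal X\times\mathcal P^K(\mathcal X)\to\mathcal P(\mathcal U)$. Dynamics: conditioned on all states at time $t$, actions are independent across agents with $u_{j,k}^t\sim\bar\pi_k^t(x_{j,k}^t,\bar{\boldsymbol\mu}_t^{\mathbf N})$; conditioned on states and actions, next states are independent with $x_{j,k}^{t+1}\sim\bar P_k(x_{j,k}^t,u_{j,k}^t,\bar{\boldsymbol\mu}_t^{\mathbf N},\bar{\boldsymbol\nu}_t^{\mathbf N})$. Mean-field operators: $\bar\nu^{\mathrm{MF}}(\bar{\boldsymbol\mu},\bar{\boldsymbol\pi})(u,k)=\sum_x\bar\pi_k(x,\bar{\boldsymbol\mu})(u)\bar{\boldsymbol\mu}(x,k)$; $\bar P^{\mathrm{MF}}(\bar{\boldsymbol\mu},\bar{\boldsymbol\pi})(x',k)=\sum_{x,u}\bar{\boldsymbol\mu}(x,k)\bar\pi_k(x,\bar{\boldsymbol\mu})(u)\bar P_k(x,u,\bar{\boldsymbol\mu},\bar\nu^{\mathrm{MF}}(\bar{\boldsymbol\mu},\bar{\boldsymbol\pi}))(x')$;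 $\bar r_k^{\mathrm{MF}}(\bar{\boldsymbol\mu},\bar{\boldsymbol\pi})=\sum_{x,u}\bar{\boldsymbol\mu}(x,k)\bar\pi_k(x,\bar{\boldsymbol\mu})(u)\bar r_k(x,u,\bar{\boldsymbol\mu},\bar\nu^{\mathrm{MF}}(\bar{\boldsymbol\mu},\bar{\boldsymbol\pi}))$. *)

From HB Require Import structures.
From mathcomp Require Import all_boot all_order all_algebra.
From mathcomp Require Export reals.
Set Implicit Arguments. Unset Strict Implicit. Unset Printing Implicit Defensive.
Import Order.TTheory GRing.Theory Num.Theory.
Local Open Scope ring_scope.

Section MFDefs.
Variable R : realType.
Variable K : nat.
Variable N : 'I_K -> nat.

(* agents: pairs (k, j) with k a class and j in [N_k] (0-indexed) *)
Definition agent : finType := {k : 'I_K & 'I_(N k)}.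
Definition agt (k : 'I_K) (j : 'I_(N k)) : agent := existT (fun k => 'I_(N k)) k j.

Definition is_dist (A : finType) (p : A -> R) :=
  (forall a, 0 <= p a) /\ \sum_a p a = 1.
(* elements of P^K(A): mu(., k) is a distribution for each class k *)
Definition is_distK (A : finType) (mu : A -> 'I_K -> R) :=
  forall k, is_dist (fun a => mu a k).

Definition l1 (A : finType) (p q : A -> R) := \sum_a `|p a - q a|.
Definition l1K (A : finType) (m1 m2 : A -> 'I_K -> R) :=
  \sum_k \sum_a `|m1 a k - m2 a k|.

Definition emp (A : finType) (c : agent -> A) : A -> 'I_K -> R :=
  fun a k => (N k)%:R^-1 * \sum_(j < N k) (c (agt j) == a)%:R.

Variables X U : finType.

(* one-step policy pi_t = (pi_k^t)_k, pi_k^t : X x P^K(X) -> P(U) *)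
Definition polT := 'I_K -> X -> (X -> 'I_K -> R) -> U -> R.
Definition transT := 'I_K -> X -> U -> (X -> 'I_K -> R) -> (U -> 'I_K -> R) -> X -> R.
Definition rewT := 'I_K -> X -> U -> (X -> 'I_K -> R) -> (U -> 'I_K -> R) -> R.

Definition nuMF (mu : X -> 'I_K -> R) (pit : polT) : U -> 'I_K -> R :=
  fun u k => \sum_x pit k x mu u * mu x k.
Definition PMF (P : transT) (mu : X -> 'I_K -> R) (pit : polT) : X -> 'I_K -> R :=
  fun x' k => \sum_x \sum_u mu x k * pit k x mu u * P k x u mu (nuMF mu pit) x'.
Definition rMF (r : rewT) (mu : X -> 'I_K -> R) (pit : polT) (k : 'I_K) : R :=
  \sum_x \sum_u mu x k * pit k x mu u * r k x u mu (nuMF mu pit).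

Definition sconf : finType := {ffun agent -> X}.
Definition aconf : finType := {ffun agent -> U}.

(* conditional law of the joint action given the joint state (independent) *)
Definition actker (pit : polT) (s : sconf) (a : aconf) : R :=
  \prod_i pit (tag i) (s i) (emp s) (a i).
(* conditional law of the next joint state given states and actions *)
Definition transker (P : transT) (s : sconf) (a : aconf) (s' : sconf) : R :=
  \prod_i P (tag i) (s i) (a i) (emp s) (emp a) (s' i).

Fixpoint law (p0 : sconf -> R) (pi : nat -> polT) (P : transT) (t : nat)
  (s' : sconf) : R :=
  match t with
  | 0 => p0 s'
  | t.+1 => \sum_s \sum_a law p0 pi P t s * actker (pi t) s a * transker P s a s'
  end.

End MFDefs.
Arguments emp {R K N A} c _ _.

From HB Require Import structures.
From mathcomp Require Import all_boot all_order all_algebra.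
From mathcomp Require Import reals.
From mathcomp Require Import ring lra.
Set Implicit Arguments. Unset Strict Implicit. Unset Printing Implicit Defensive.
Import Order.TTheory GRing.Theory Num.Theory.
Local Open Scope ring_scope.

(* Given the joint state, the agents' actions are independent, and so are their next
   states given states and actions.  A class-wise empirical average is therefore a
   normalised sum of N_k independent centred terms: its second moment is at most
   C^2 / N_k, so by Jensen its expected absolute value is at most C / sqrt N_k, and
   Cauchy-Schwarz over the |U| (or |X|) coordinates adds a factor sqrt |U| (or
   sqrt |X|).  This is (a).  In (b), Lipschitz continuity of the rewards reduces the
   replacement of the empirical action distribution by its mean-field value to (a),
   and what remains is a centred average of rewards bounded by M_R.  In (c), the
   triangle inequality through the conditional means of the next empirical
   distribution leaves a fluctuation of the transitions, a Lipschitz term controlled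
   by (a), and a fluctuation of the actions.  All bounds hold given the state at
   time t, hence also on average over its law. *)

Section RealFacts.
Variable R : realType.

Lemma sum_eqb_mul (A : finType) (b : A) (f : A -> R) :
  \sum_a (a == b)%:R * f a = f b.
Proof.
rewrite (bigD1 b) //= eqxx mul1r big1 ?addr0 // => a /negbTE ->.
by rewrite mul0r.
Qed.

Lemma divr_sqrt (x : R) : 0 <= x -> x / Num.sqrt x = Num.sqrt x.
Proof.
move=> x_ge0; rewrite -{1}(sqr_sqrtr x_ge0) expr2.
have [->|nz] := eqVneq (Num.sqrt x) 0; first by rewrite !mul0r.
by rewrite mulfK.
Qed.

Lemma invr_sqrt (x : R) : 0 < x -> (Num.sqrt x)^-1 = x^-1 * Num.sqrt x.
Proof. by move=> x_gt0; rewrite -{2}(divr_sqrt (ltW x_gt0)) mulKf ?gt_eqF. Qed.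

Lemma sqrt_card_ge1 (A : finType) : (0 < #|A|)%N -> 1 <= Num.sqrt #|A|%:R :> R.
Proof. by move=> A_gt0; rewrite -sqrtr1 ler_wsqrtr // sqrtr1 ler1n. Qed.

Lemma sum_mul_subr_sqr (I : finType) (w y : I -> R) (c : R) :
  \sum_i w i * (y i - c) ^+ 2 =
  \sum_i w i * y i ^+ 2 - 2 * c * (\sum_i w i * y i) + c ^+ 2 * \sum_i w i.
Proof.
rewrite mulr_sumr [c ^+ 2 * _]mulr_sumr -sumrB -big_split /=.
by apply: eq_bigr => i _; rewrite sqrrB; ring.
Qed.

Lemma avg_le (I : finType) (w f : I -> R) (B : R) :
  (forall i, 0 <= w i) -> \sum_i w i = 1 -> (forall i, f i <= B) ->
  \sum_i w i * f i <= B.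
Proof.
move=> w_ge0 w_sum1 f_le; rewrite -[B]mul1r -w_sum1 mulr_suml.
by apply: ler_sum => i _; apply: ler_wpM2l.
Qed.

Lemma dist_sqr_sum_le1 (A : finType) (p : A -> R) : is_dist p -> \sum_a p a ^+ 2 <= 1.
Proof.
move=> [p_ge0 p_sum1]; rewrite -[X in _ <= X]p_sum1; apply: ler_sum => a _.
rewrite expr2 ler_piMr // -p_sum1 (bigD1 a) //= lerDl.
by apply: sumr_ge0 => b _.
Qed.

Lemma avg_norm_le_sqrt (I : finType) (w z : I -> R) :
  (forall i, 0 <= w i) -> \sum_i w i = 1 ->
  \sum_i w i * `|z i| <= Num.sqrt (\sum_i w i * z i ^+ 2).
Proof.
move=> w_ge0 w_sum1.
set E := \sum_i w i * `|z i|; set F := \sum_i w i * z i ^+ 2.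
have E_ge0 : 0 <= E by apply: sumr_ge0 => i _; apply: mulr_ge0.
have var_ge0 : 0 <= \sum_i w i * (`|z i| - E) ^+ 2.
  by apply: sumr_ge0 => i _; rewrite mulr_ge0 // sqr_ge0.
have sqr_norm i : `|z i| ^+ 2 = z i ^+ 2 by rewrite real_normK ?num_real.
rewrite sum_mul_subr_sqr w_sum1 (eq_bigr _ (fun i _ => congr1 _ (sqr_norm i))) in var_ge0.
rewrite -(ger0_norm E_ge0) -sqrtr_sqr ler_wsqrtr //.
by move: var_ge0; rewrite -/E -/F; nra.
Qed.

Lemma sum_sqrt_le (A : finType) (c : A -> R) : (forall a, 0 <= c a) ->
  \sum_a Num.sqrt (c a) <= Num.sqrt #|A|%:R * Num.sqrt (\sum_a c a).
Proof.
move=> c_ge0; have [/card0_eq A0|A_gt0] := posnP #|A|.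
  by rewrite big_pred0 // mulr_ge0 ?sqrtr_ge0.
set n : R := #|A|%:R; have n_gt0 : 0 < n by rewrite ltr0n.
have w_sum1 : \sum_(a : A) n^-1 = 1 by rewrite sumr_const -mulr_natr mulVf ?gt_eqF.
have w_ge0 : 0 <= n^-1 by rewrite invr_ge0 ltW.
have := avg_norm_le_sqrt (fun a => Num.sqrt (c a)) (fun=> w_ge0) w_sum1.
rewrite -!mulr_sumr.
under eq_bigr do rewrite ger0_norm ?sqrtr_ge0 //.
under [X in Num.sqrt (_ * X)]eq_bigr do rewrite sqr_sqrtr //.
rewrite sqrtrM // sqrtrV ?(ltW n_gt0) // -(ler_pM2l n_gt0).
by rewrite mulrA mulfV ?gt_eqF // mul1r mulrA divr_sqrt ?(ltW n_gt0).
Qed.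

End RealFacts.

Section ProductLaw.
Variables (R : realType) (I V : finType) (q : I -> V -> R).

Definition prod_law (a : {ffun I -> V}) : R := \prod_i q i (a i).

Lemma sum_prod_law_prod (G : I -> V -> R) :
  \sum_a prod_law a * \prod_i G i (a i) = \prod_i \sum_v q i v * G i v.
Proof. by rewrite bigA_distr_bigA /=; apply: eq_bigr => a _; rewrite -big_split. Qed.

Hypothesis q_ge0 : forall i v, 0 <= q i v.
Hypothesis q_sum1 : forall i, \sum_v q i v = 1.

Lemma prod_law_ge0 a : 0 <= prod_law a.
Proof. exact: prodr_ge0. Qed.

Lemma sum_prod_law_prod_in (S : pred I) (G : I -> V -> R) :
  \sum_a prod_law a * \prod_(i | S i) G i (a i) = \prod_(i | S i) \sum_v q i v * G i v.
Proof.
transitivity (\sum_a prod_law a * \prod_i (if S i then G i (a i) else 1)).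
  by apply: eq_bigr => a _; rewrite big_mkcond.
rewrite (sum_prod_law_prod (fun i v => if S i then G i v else 1)) [RHS]big_mkcond.
apply: eq_bigr => i _; case: (S i) => //.
by under eq_bigr do rewrite mulr1.
Qed.

Lemma sum_prod_law : \sum_a prod_law a = 1.
Proof.
transitivity (\sum_a prod_law a * \prod_(i : I) (1 : R)).
  by under [RHS]eq_bigr do rewrite big1_eq mulr1.
rewrite (sum_prod_law_prod (fun _ _ => 1)) big1 // => i _.
by under eq_bigr do rewrite mulr1.
Qed.

Lemma prod_law_marginal i (f : V -> R) :
  \sum_a prod_law a * f (a i) = \sum_v q i v * f v.
Proof.
have := sum_prod_law_prod_in (pred1 i) (fun _ => f).
by rewrite big_pred1_eq; under eq_bigr do rewrite big_pred1_eq.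
Qed.

Lemma prod_law_marginal2 i i' (f h : V -> R) : i != i' ->
  \sum_a prod_law a * (f (a i) * h (a i')) =
  (\sum_v q i v * f v) * (\sum_v q i' v * h v).
Proof.
move=> neq_ii'; pose S := [pred j | (j == i) || (j == i')].
have pair F : \prod_(j | S j) F j = F i * F i' :> R.
  rewrite (bigD1 i) /= ?eqxx // (big_pred1 i') // => j /=.
  by case: eqVneq => [->|_]; rewrite ?(negbTE neq_ii') ?andbT ?orbF // eq_sym.
have := sum_prod_law_prod_in S (fun j v => if j == i then f v else h v).
rewrite pair eqxx eq_sym (negbTE neq_ii').
by under eq_bigr do rewrite pair eqxx eq_sym (negbTE neq_ii').
Qed.

Lemma sum_mul_centered i (f : V -> R) :
  \sum_v q i v * (f v - \sum_w q i w * f w) = 0.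
Proof.
under eq_bigr do rewrite mulrBr.
by rewrite sumrB -mulr_suml q_sum1 mul1r subrr.
Qed.

Lemma sum_mul_centered_sqr_le i (f : V -> R) :
  \sum_v q i v * (f v - \sum_w q i w * f w) ^+ 2 <= \sum_v q i v * f v ^+ 2.
Proof.
rewrite sum_mul_subr_sqr q_sum1; set m := \sum_w _.
by have := sqr_ge0 m; nra.
Qed.

Section Centered.
Variables (J : finType) (g : J -> I) (Y : J -> V -> R).
Hypothesis g_inj : injective g.

Lemma prod_law_sqr_sum_centered :
  \sum_a prod_law a * (\sum_j (Y j (a (g j)) - \sum_v q (g j) v * Y j v)) ^+ 2
  <= \sum_j \sum_v q (g j) v * Y j v ^+ 2.
Proof.
pose f j v := Y j v - \sum_w q (g j) w * Y j w.
have uncorrelated j j' : j != j' ->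
    \sum_a prod_law a * (f j (a (g j)) * f j' (a (g j'))) = 0.
  move=> neq_jj'; rewrite prod_law_marginal2 ?(contra_neq (@g_inj j j')) //.
  by rewrite /f sum_mul_centered mul0r.
under eq_bigr do rewrite expr2 mulr_suml mulr_sumr.
rewrite exchange_big; apply: ler_sum => j _ /=.
under eq_bigr do rewrite mulr_sumr mulr_sumr.
rewrite exchange_big (bigD1 j) //= [X in _ + X]big1 ?addr0 => [|j' neq_j'j]; last first.
  by apply: uncorrelated; rewrite eq_sym.
rewrite (prod_law_marginal (g j) (fun v => f j v ^+ 2)).
exact: sum_mul_centered_sqr_le.
Qed.

Lemma prod_law_abs_sum_centered :
  \sum_a prod_law a * `|\sum_j (Y j (a (g j)) - \sum_v q (g j) v * Y j v)|
  <= Num.sqrt (\sum_j \sum_v q (g j) v * Y j v ^+ 2).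
Proof.
apply: le_trans (avg_norm_le_sqrt _ prod_law_ge0 sum_prod_law) _.
exact/ler_wsqrtr/prod_law_sqr_sum_centered.
Qed.


End Centered.

Lemma prod_law_l1_sum_centered (J W : finType) (g : J -> I)
    (Y : J -> V -> W -> R) (C : R) :
  injective g -> 0 <= C -> (forall j v, \sum_w Y j v w ^+ 2 <= C ^+ 2) ->
  \sum_w \sum_a prod_law a *
      `|\sum_j (Y j (a (g j)) w - \sum_v q (g j) v * Y j v w)|
  <= C * Num.sqrt #|W|%:R * Num.sqrt #|J|%:R.
Proof.
move=> g_inj C_ge0 Y_le.
apply: le_trans
  (ler_sum _ (fun w _ => prod_law_abs_sum_centered (fun j v => Y j v w) g_inj)) _.
apply: le_trans (sum_sqrt_le _) _ => [w|].
  by apply: sumr_ge0 => j _; apply: sumr_ge0 => v _; rewrite mulr_ge0 ?sqr_ge0.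
have second_moment :
    \sum_w \sum_j \sum_v q (g j) v * Y j v w ^+ 2 <= #|J|%:R * C ^+ 2.
  have -> : #|J|%:R * C ^+ 2 = \sum_(j : J) C ^+ 2 by rewrite sumr_const mulr_natl.
  rewrite exchange_big; apply: ler_sum => j _ /=.
  rewrite exchange_big /=; under eq_bigr do rewrite -mulr_sumr.
  exact: avg_le.
rewrite [C * _]mulrC -mulrA ler_wpM2l ?sqrtr_ge0 //.
rewrite -[C in C * _]ger0_norm // -sqrtr_sqr mulrC -sqrtrM ?ler0n //.
exact: ler_wsqrtr.
Qed.

End ProductLaw.

Section Agents.
Variables (R : realType) (K : nat) (N : 'I_K -> nat).
Hypothesis N_gt0 : forall k, (0 < N k)%N.

Definition class_avg (A : Type) (F : forall k, 'I_(N k) -> A -> R) : A -> 'I_K -> R :=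
  fun a k => (N k)%:R^-1 * \sum_(j < N k) F k j a.

Definition inv_sqrt_sum : R := \sum_k (Num.sqrt (N k)%:R)^-1.

Lemma inv_sqrt_sum_ge0 : 0 <= inv_sqrt_sum.
Proof. by apply: sumr_ge0 => k _; rewrite invr_ge0 sqrtr_ge0. Qed.

Lemma agt_inj k : injective (@agt K N k).
Proof. by move=> j j'; apply: Eqdep_dec.inj_pair2_eq_dec; apply: eq_comparable. Qed.

Lemma conf_card_gt0 (V : finType) (a : {ffun agent N -> V}) :
  (0 < K)%N -> (0 < #|V|)%N.
Proof.
move=> K_gt0; pose k := Ordinal K_gt0.
by apply/card_gt0P; exists (a (agt (Ordinal (N_gt0 k)))).
Qed.

Lemma emp_avg (A : finType) (c : agent N -> A) k (f : A -> R) :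
  \sum_a emp c a k * f a = (N k)%:R^-1 * \sum_(j < N k) f (c (agt j)).
Proof.
rewrite /emp; under eq_bigr do rewrite -mulrA mulr_suml.
rewrite -mulr_sumr exchange_big /=; congr (_ * _); apply: eq_bigr => j _.
by under eq_bigr do rewrite eq_sym; rewrite sum_eqb_mul.
Qed.

Lemma emp_dist (A : finType) (c : agent N -> A) : is_distK (emp c : A -> 'I_K -> R).
Proof.
move=> k; split=> [a|].
  by rewrite mulr_ge0 ?invr_ge0 ?ler0n //; apply: sumr_ge0 => j _; rewrite ler0n.
have := emp_avg c k (fun _ => 1); under eq_bigr do rewrite mulr1.
by move=> ->; rewrite sumr_const card_ord -mulr_natr mul1r mulVf // pnatr_eq0 -lt0n.
Qed.

Lemma eq_l1Kr (A : finType) (m m1 m2 : A -> 'I_K -> R) :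
  (forall a k, m1 a k = m2 a k) -> l1K m m1 = l1K m m2.
Proof. by move=> e; apply: eq_bigr => k _; apply: eq_bigr => a _; rewrite e. Qed.

Lemma l1K_refl (A : finType) (m : A -> 'I_K -> R) : l1K m m = 0.
Proof. by apply: big1 => k _; apply: big1 => a _; rewrite subrr normr0. Qed.

Lemma l1K_ord1 (m1 m2 : 'I_1 -> 'I_K -> R) :
  l1K m1 m2 = \sum_k `|m1 ord0 k - m2 ord0 k|.
Proof. by apply: eq_bigr => k _; rewrite big_ord1. Qed.

Lemma l1K_triangle (A : finType) (m1 m2 m3 : A -> 'I_K -> R) :
  l1K m1 m3 <= l1K m1 m2 + l1K m2 m3.
Proof.
rewrite /l1K -big_split; apply: ler_sum => k _; rewrite -big_split.
by apply: ler_sum => a _; rewrite -(subrKA (m2 a k)) ler_normD.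
Qed.

Lemma l1K_class_avg_le (A : finType) (F G : forall k, 'I_(N k) -> A -> R) (B : R) :
  (forall k j, \sum_a `|F k j a - G k j a| <= B) ->
  l1K (class_avg F) (class_avg G) <= K%:R * B.
Proof.
move=> FG_le.
have -> : K%:R * B = \sum_(k < K) B by rewrite sumr_const card_ord mulr_natl.
apply: ler_sum => k _.
have N_neq0 : (N k)%:R != 0 :> R by rewrite pnatr_eq0 -lt0n.
have Ninv_ge0 : 0 <= (N k)%:R^-1 :> R by rewrite invr_ge0 ler0n.
under eq_bigr do rewrite /class_avg -mulrBr -sumrB normrM ger0_norm //.
rewrite -mulr_sumr -[B in _ <= B](mulKf N_neq0) ler_wpM2l //.
apply: le_trans (ler_sum _ (fun a _ => ler_norm_sum _ _ _)) _.
have -> : (N k)%:R * B = \sum_(j < N k) B by rewrite sumr_const card_ord mulr_natl.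
by rewrite exchange_big ler_sum.
Qed.

Lemma class_avg_concentration (V W : finType) (q : agent N -> V -> R)
    (Y : forall k, 'I_(N k) -> V -> W -> R) (m : forall k, 'I_(N k) -> W -> R) (C : R) :
  (forall i v, 0 <= q i v) -> (forall i, \sum_v q i v = 1) ->
  (forall k j w, m k j w = \sum_v q (agt j) v * Y k j v w) ->
  0 <= C -> (forall k j v, \sum_w Y k j v w ^+ 2 <= C ^+ 2) ->
  \sum_a prod_law q a * l1K (class_avg (fun k j w => Y k j (a (agt j)) w)) (class_avg m)
  <= C * inv_sqrt_sum * Num.sqrt #|W|%:R.
Proof.
move=> q_ge0 q_sum1 m_mean C_ge0 Y_le.
rewrite /l1K /inv_sqrt_sum mulr_sumr mulr_suml; under eq_bigr do rewrite mulr_sumr.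
rewrite exchange_big; apply: ler_sum => k _ /=.
have Nk_gt0 : 0 < (N k)%:R :> R by rewrite ltr0n.
have Ninv_ge0 : 0 <= (N k)%:R^-1 :> R by rewrite invr_ge0 ltW.
under eq_bigr do under eq_bigr do
  rewrite /class_avg -mulrBr -sumrB normrM ger0_norm //.
under eq_bigr do rewrite -mulr_sumr mulrCA mulr_sumr.
rewrite -mulr_sumr exchange_big /=.
under eq_bigr do under eq_bigr do under eq_bigr do rewrite m_mean.
apply: le_trans (ler_wpM2l Ninv_ge0
  (prod_law_l1_sum_centered q_ge0 q_sum1 (@agt_inj k) C_ge0 (Y_le k))) _.
by rewrite card_ord invr_sqrt // !mulrA [_ * C]mulrC mulrAC.
Qed.

Lemma emp_concentration (V : finType) (q : agent N -> V -> R) :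
  (forall i v, 0 <= q i v) -> (forall i, \sum_v q i v = 1) ->
  \sum_a prod_law q a * l1K (emp a) (class_avg (fun k j v => q (agt j) v))
  <= inv_sqrt_sum * Num.sqrt #|V|%:R.
Proof.
move=> q_ge0 q_sum1; rewrite -[inv_sqrt_sum]mul1r.
apply: (class_avg_concentration (Y := fun k j v w => (v == w)%:R)) => // [k j w|k j v].
  by under eq_bigr do rewrite mulrC; rewrite sum_eqb_mul.
rewrite (bigD1 v) //= eqxx expr1n big1 ?addr0 // => w.
by rewrite eq_sym => /negbTE ->; rewrite expr0n.
Qed.

Lemma pop_avgE (f : forall k, 'I_(N k) -> R) :
  \sum_k ((N k)%:R / (\sum_k N k)%N%:R) * ((N k)%:R^-1 * \sum_(j < N k) f k j)
  = ((\sum_k N k)%N%:R)^-1 * \sum_k \sum_(j < N k) f k j.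
Proof.
rewrite [RHS]mulr_sumr; apply: eq_bigr => k _.
by rewrite mulrAC mulrA mulfV ?mul1r 1?mulrC // pnatr_eq0 -lt0n.
Qed.

Lemma pop_avg_cst (c : R) : (0 < K)%N ->
  ((\sum_k N k)%N%:R)^-1 * \sum_k \sum_(j < N k) c = c.
Proof.
move=> K_gt0; under [X in _ * X]eq_bigr do rewrite sumr_const card_ord.
rewrite sumrMnr -[c *+ _]mulr_natr mulrCA mulVf ?mulr1 // pnatr_eq0 -lt0n.
by rewrite (bigD1 (Ordinal K_gt0)) //= addn_gt0 N_gt0.
Qed.

Lemma pop_avg_norm_le (f : forall k, 'I_(N k) -> R) :
  ((\sum_k N k)%N%:R)^-1 * \sum_k `|\sum_(j < N k) f k j|
  <= \sum_k `|(N k)%:R^-1 * \sum_(j < N k) f k j|.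
Proof.
rewrite mulr_sumr; apply: ler_sum => k _.
rewrite normrM ger0_norm ?invr_ge0 ?ler0n // ler_wpM2r // lef_pV2 ?posrE ?ltr0n //.
  by rewrite ler_nat (bigD1 k) //= leq_addr.
by rewrite (bigD1 k) //= addn_gt0 N_gt0.
Qed.

End Agents.

Section Policy.
Variables (R : realType) (K : nat) (N : 'I_K -> nat) (X U : finType).
Hypothesis N_gt0 : forall k, (0 < N k)%N.
Variable pit : polT R K X U.
Hypothesis pit_dist : forall k x mu, is_distK mu -> is_dist (pit k x mu).

Definition act_prob (s : sconf N X) (i : agent N) : U -> R :=
  pit (tag i) (s i) (emp s).

Lemma act_prob_ge0 (s : sconf N X) i u : 0 <= act_prob s i u.
Proof. exact: (proj1 (pit_dist _ _ (emp_dist _ N_gt0 s))). Qed.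

Lemma act_prob_sum1 (s : sconf N X) i : \sum_u act_prob s i u = 1.
Proof. exact: (proj2 (pit_dist _ _ (emp_dist _ N_gt0 s))). Qed.

Lemma nuMF_emp (s : sconf N X) u k :
  nuMF (emp s) pit u k = class_avg (fun k j u => pit k (s (agt j)) (emp s) u) u k.
Proof. by rewrite /nuMF; under eq_bigr do rewrite mulrC; rewrite emp_avg. Qed.

Lemma nuMF_dist mu : is_distK mu -> is_distK (nuMF mu pit).
Proof.
move=> mu_dist k; split=> [u|].
  apply: sumr_ge0 => x _.
  by rewrite mulr_ge0 ?(proj1 (pit_dist _ _ mu_dist)) ?(proj1 (mu_dist k)).
rewrite /nuMF exchange_big /=.
under eq_bigr do rewrite -mulr_suml (proj2 (pit_dist _ _ mu_dist)) mul1r.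
exact: (proj2 (mu_dist k)).
Qed.

Lemma actker_l1K_nuMF_le (s : sconf N X) :
  \sum_a actker pit s a * l1K (emp a) (nuMF (emp s) pit)
  <= inv_sqrt_sum R N * Num.sqrt #|U|%:R.
Proof.
under eq_bigr do rewrite (eq_l1Kr _ (nuMF_emp s)).
exact: (emp_concentration N_gt0 (act_prob_ge0 s) (act_prob_sum1 s)).
Qed.

Section Reward.
Variables (r : rewT R K X U) (MR LR : R).
Hypothesis K_gt0 : (0 < K)%N.
Hypothesis MR_ge0 : 0 <= MR.
Hypothesis LR_ge0 : 0 <= LR.
Hypothesis r_bounded : forall k x u (mu : X -> 'I_K -> R) (nu : U -> 'I_K -> R),
  is_distK mu -> is_distK nu -> `|r k x u mu nu| <= MR.
Hypothesis r_lipschitz :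
  forall k x u (mu1 mu2 : X -> 'I_K -> R) (nu1 nu2 : U -> 'I_K -> R),
  is_distK mu1 -> is_distK mu2 -> is_distK nu1 -> is_distK nu2 ->
  `|r k x u mu1 nu1 - r k x u mu2 nu2| <= LR * (l1K mu1 mu2 + l1K nu1 nu2).

Lemma rMF_emp (s : sconf N X) k :
  rMF r (emp s) pit k = (N k)%:R^-1 * \sum_(j < N k) \sum_u
    pit k (s (agt j)) (emp s) u * r k (s (agt j)) u (emp s) (nuMF (emp s) pit).
Proof.
rewrite /rMF; under eq_bigr do (under eq_bigr do rewrite -mulrA; rewrite -mulr_sumr).
exact: emp_avg.
Qed.

Definition reward_gap (s : sconf N X) (a : aconf N U) : R :=
  `| ((\sum_k N k)%N%:R)^-1 * \sum_k \sum_(j < N k)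
        r k (s (agt j)) (a (agt j)) (emp s) (emp a)
     - \sum_k ((N k)%:R / (\sum_k N k)%N%:R) * rMF r (emp s) pit k |.

Lemma reward_gap_le (s : sconf N X) (a : aconf N U) :
  reward_gap s a <= LR * l1K (emp a) (nuMF (emp s) pit) + \sum_k `|(N k)%:R^-1 *
    \sum_(j < N k) (r k (s (agt j)) (a (agt j)) (emp s) (nuMF (emp s) pit)
      - \sum_u pit k (s (agt j)) (emp s) u
          * r k (s (agt j)) u (emp s) (nuMF (emp s) pit))|.
Proof.
set nu := nuMF (emp s) pit.
have Np_inv_ge0 : 0 <= ((\sum_k N k)%N%:R)^-1 :> R by rewrite invr_ge0 ler0n.
have nu_dist : is_distK nu by apply: nuMF_dist; apply: emp_dist.
rewrite /reward_gap; under [X in _ - X]eq_bigr do rewrite rMF_emp.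
rewrite pop_avgE // -mulrBr -sumrB.
under [X in `|_ * X|]eq_bigr => k _ do
  rewrite -(subrKA (\sum_(j < N k) r k (s (agt j)) (a (agt j)) (emp s) nu)) -!sumrB.
rewrite big_split mulrDr; apply: le_trans (ler_normD _ _) _; apply: lerD; last first.
  rewrite normrM ger0_norm // (le_trans _ (pop_avg_norm_le N_gt0 _)) //.
  by rewrite ler_wpM2l // ler_norm_sum.
rewrite -[X in _ <= X](pop_avg_cst N_gt0 _ K_gt0) normrM ger0_norm // ler_wpM2l //.
apply: le_trans (ler_norm_sum _ _ _) _; apply: ler_sum => k _.
apply: le_trans (ler_norm_sum _ _ _) _; apply: ler_sum => j _.
have := r_lipschitz k (s (agt j)) (a (agt j)) (emp_dist _ N_gt0 s) (emp_dist _ N_gt0 s)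
  (emp_dist _ N_gt0 a) nu_dist.
by rewrite l1K_refl add0r.
Qed.

Lemma actker_reward_gap_le (s : sconf N X) :
  \sum_a actker pit s a * reward_gap s a
  <= (MR + LR) * inv_sqrt_sum R N * Num.sqrt #|U|%:R.
Proof.
have S_ge0 := inv_sqrt_sum_ge0 R N.
have [U0|U_gt0] := posnP #|U|.
  rewrite big1 ?mulr_ge0 ?addr_ge0 ?sqrtr_ge0 // => a _.
  by have := conf_card_gt0 N_gt0 a K_gt0; rewrite U0.
set nu := nuMF (emp s) pit.
have fluctuation : \sum_a actker pit s a * \sum_k `|(N k)%:R^-1 *
    \sum_(j < N k) (r k (s (agt j)) (a (agt j)) (emp s) nu
      - \sum_u pit k (s (agt j)) (emp s) u * r k (s (agt j)) u (emp s) nu)|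
    <= MR * inv_sqrt_sum R N.
  have r_sqr_le k (j : 'I_(N k)) u :
      \sum_(w < 1) r k (s (agt j)) u (emp s) nu ^+ 2 <= MR ^+ 2.
    rewrite big_ord1 -real_normK ?num_real // lerXn2r ?nnegrE //.
    by apply: r_bounded; [apply: emp_dist | apply/nuMF_dist/emp_dist].
  (* the scalar case, as vectors indexed by ['I_1] *)
  have := class_avg_concentration N_gt0 (act_prob_ge0 s) (act_prob_sum1 s)
    (Y := fun k j u (_ : 'I_1) => r k (s (agt j)) u (emp s) nu)
    (fun k j _ => erefl) MR_ge0 r_sqr_le.
  rewrite card_ord sqrtr1 mulr1; apply: le_trans.
  apply: ler_sum => a _; rewrite l1K_ord1 ler_wpM2l ?(prod_law_ge0 (act_prob_ge0 s)) //.
  by apply: ler_sum => k _; rewrite /class_avg -mulrBr -sumrB.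
apply: le_trans (ler_sum _ (fun a _ => ler_wpM2l (prod_law_ge0 (act_prob_ge0 s) a)
  (reward_gap_le s a))) _.
under eq_bigr do rewrite mulrDr mulrCA; rewrite big_split -mulr_sumr /=.
apply: le_trans (lerD (ler_wpM2l LR_ge0 (actker_l1K_nuMF_le s)) fluctuation) _.
have := sqrt_card_ge1 R U_gt0; have := mulr_ge0 MR_ge0 S_ge0; nra.
Qed.

End Reward.

Section Transition.
Variables (P : transT R K X U) (LP : R).
Hypothesis K_gt0 : (0 < K)%N.
Hypothesis LP_ge0 : 0 <= LP.
Hypothesis P_dist : forall k x u (mu : X -> 'I_K -> R) (nu : U -> 'I_K -> R),
  is_distK mu -> is_distK nu -> is_dist (P k x u mu nu).
Hypothesis P_lipschitz :
  forall k x u (mu1 mu2 : X -> 'I_K -> R) (nu1 nu2 : U -> 'I_K -> R),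
  is_distK mu1 -> is_distK mu2 -> is_distK nu1 -> is_distK nu2 ->
  l1 (P k x u mu1 nu1) (P k x u mu2 nu2) <= LP * (l1K mu1 mu2 + l1K nu1 nu2).

Definition next_prob (s : sconf N X) (a : aconf N U) (i : agent N) : X -> R :=
  P (tag i) (s i) (a i) (emp s) (emp a).

Lemma next_prob_ge0 (s : sconf N X) (a : aconf N U) i x : 0 <= next_prob s a i x.
Proof. exact: (proj1 (P_dist _ _ _ (emp_dist _ N_gt0 s) (emp_dist _ N_gt0 a))). Qed.

Lemma next_prob_sum1 (s : sconf N X) (a : aconf N U) i : \sum_x next_prob s a i x = 1.
Proof. exact: (proj2 (P_dist _ _ _ (emp_dist _ N_gt0 s) (emp_dist _ N_gt0 a))). Qed.

(* With [nu := emp a] this is the conditional mean of the next class-wise empirical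
   state distribution given the current states and actions. *)
Definition next_mean (s : sconf N X) (a : aconf N U) (nu : U -> 'I_K -> R) :=
  class_avg (fun k j x => P k (s (agt j)) (a (agt j)) (emp s) nu x).

Lemma PMF_emp (s : sconf N X) x k :
  PMF P (emp s) pit x k = class_avg (fun k j x => \sum_u
    pit k (s (agt j)) (emp s) u * P k (s (agt j)) u (emp s) (nuMF (emp s) pit) x) x k.
Proof.
rewrite /PMF; under eq_bigr do (under eq_bigr do rewrite -mulrA; rewrite -mulr_sumr).
exact: emp_avg.
Qed.

Lemma transker_l1K_next_mean_le (s : sconf N X) (a : aconf N U) :
  \sum_s' transker P s a s' * l1K (emp s') (next_mean s a (emp a))
  <= inv_sqrt_sum R N * Num.sqrt #|X|%:R.
Proof. exact: (emp_concentration N_gt0 (next_prob_ge0 s a) (next_prob_sum1 s a)). Qed.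

Lemma l1K_next_mean_le (s : sconf N X) (a : aconf N U) nu1 nu2 :
  is_distK nu1 -> is_distK nu2 ->
  l1K (next_mean s a nu1) (next_mean s a nu2) <= K%:R * LP * l1K nu1 nu2.
Proof.
move=> nu1_dist nu2_dist; rewrite -mulrA; apply: (l1K_class_avg_le N_gt0) => k j.
have := P_lipschitz k (s (agt j)) (a (agt j)) (emp_dist _ N_gt0 s) (emp_dist _ N_gt0 s)
  nu1_dist nu2_dist.
by rewrite l1K_refl add0r.
Qed.

Lemma actker_l1K_next_mean_PMF_le (s : sconf N X) :
  \sum_a actker pit s a * l1K (next_mean s a (nuMF (emp s) pit)) (PMF P (emp s) pit)
  <= inv_sqrt_sum R N * Num.sqrt #|X|%:R.
Proof.
under eq_bigr do rewrite (eq_l1Kr _ (PMF_emp s)).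
rewrite -[inv_sqrt_sum R N]mul1r.
apply: (class_avg_concentration N_gt0 (act_prob_ge0 s) (act_prob_sum1 s)
  (Y := fun k j u x => P k (s (agt j)) u (emp s) (nuMF (emp s) pit) x)) => // k j u.
rewrite expr1n; apply/dist_sqr_sum_le1/P_dist; first exact: emp_dist.
exact/nuMF_dist/emp_dist.
Qed.

Lemma transker_l1K_PMF_le (s : sconf N X) (a : aconf N U) :
  \sum_s' transker P s a s' * l1K (emp s') (PMF P (emp s) pit)
  <= inv_sqrt_sum R N * Num.sqrt #|X|%:R
     + K%:R * LP * l1K (emp a) (nuMF (emp s) pit)
     + l1K (next_mean s a (nuMF (emp s) pit)) (PMF P (emp s) pit).
Proof.
set nu := nuMF (emp s) pit; set M1 := next_mean s a (emp a); set M2 := next_mean s a nu.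
have triangle (s' : sconf N X) : l1K (emp s') (PMF P (emp s) pit)
    <= l1K (emp s') M1 + (l1K M1 M2 + l1K M2 (PMF P (emp s) pit)).
  exact: le_trans (l1K_triangle _ M1 _) (lerD (lexx _) (l1K_triangle _ M2 _)).
apply: le_trans (ler_sum _ (fun s' _ =>
  ler_wpM2l (prod_law_ge0 (next_prob_ge0 s a) s') (triangle s'))) _.
under eq_bigr do rewrite mulrDr.
rewrite big_split /= -mulr_suml (sum_prod_law (next_prob_sum1 s a)) mul1r.
rewrite addrA lerD2r lerD ?transker_l1K_next_mean_le //.
by apply: l1K_next_mean_le; [apply: emp_dist | apply/nuMF_dist/emp_dist].
Qed.

Lemma actker_transker_l1K_PMF_le (s : sconf N X) :
  \sum_a actker pit s a *
    (\sum_s' transker P s a s' * l1K (emp s') (PMF P (emp s) pit))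
  <= (2 + K%:R * LP) * inv_sqrt_sum R N * Num.sqrt (#|X| * #|U|)%:R.
Proof.
have S_ge0 := inv_sqrt_sum_ge0 R N.
have KLP_ge0 : 0 <= K%:R * LP by rewrite mulr_ge0 ?ler0n.
have [U0|U_gt0] := posnP #|U|.
  rewrite big1 ?mulr_ge0 ?addr_ge0 ?sqrtr_ge0 // => a _.
  by have := conf_card_gt0 N_gt0 a K_gt0; rewrite U0.
apply: le_trans (ler_sum _ (fun a _ =>
  ler_wpM2l (prod_law_ge0 (act_prob_ge0 s) a) (transker_l1K_PMF_le s a))) _.
under eq_bigr do rewrite !mulrDr [_ * (_ * l1K _ _)]mulrCA.
rewrite !big_split /= -mulr_suml (sum_prod_law (act_prob_sum1 s)) mul1r -mulr_sumr.
apply: le_trans (lerD (lerD (lexx _) (ler_wpM2l KLP_ge0 (actker_l1K_nuMF_le s)))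
  (actker_l1K_next_mean_PMF_le s)) _.
have sX_ge1 := sqrt_card_ge1 R (conf_card_gt0 N_gt0 s K_gt0).
have sU_ge1 := sqrt_card_ge1 R U_gt0.
rewrite natrM sqrtrM ?ler0n //.
set sX := Num.sqrt #|X|%:R in sX_ge1 *; set sU := Num.sqrt #|U|%:R in sU_ge1 *.
set S := inv_sqrt_sum R N in S_ge0 *; set L := K%:R * LP in KLP_ge0 *.
have h1 : S * sX <= S * sX * sU by rewrite ler_peMr // mulr_ge0 // (le_trans ler01).
have h2 : L * (S * sU) <= L * (S * sU) * sX.
  by rewrite ler_peMr // !mulr_ge0 // (le_trans ler01).
lra.
Qed.

End Transition.

End Policy.

Lemma law_dist (R : realType) (K : nat) (N : 'I_K -> nat) (X U : finType)
    (pi : nat -> polT R K X U) (P : transT R K X U) (p0 : sconf N X -> R) :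
  (forall k, (0 < N k)%N) ->
  (forall t k x mu, is_distK mu -> is_dist (pi t k x mu)) ->
  (forall k x u (mu : X -> 'I_K -> R) (nu : U -> 'I_K -> R),
      is_distK mu -> is_distK nu -> is_dist (P k x u mu nu)) ->
  is_dist p0 -> forall t, is_dist (law p0 pi P t).
Proof.
move=> N_gt0 pi_dist P_dist [p0_ge0 p0_sum1]; elim=> [|t [law_ge0 law_sum1]] //=.
have act_ge0 s := prod_law_ge0 (act_prob_ge0 N_gt0 (pi_dist t) s).
have act_sum1 s := sum_prod_law (act_prob_sum1 N_gt0 (pi_dist t) s).
have trans_ge0 s a := prod_law_ge0 (next_prob_ge0 N_gt0 P_dist s a).
have trans_sum1 s a := sum_prod_law (next_prob_sum1 N_gt0 P_dist s a).
split=> [s'|].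
  apply: sumr_ge0 => s _; apply: sumr_ge0 => a _.
  by rewrite !mulr_ge0 ?law_ge0 ?act_ge0 ?trans_ge0.
rewrite exchange_big /= -law_sum1; apply: eq_bigr => s _.
rewrite exchange_big /= -[RHS]mulr1 -(act_sum1 s) mulr_sumr; apply: eq_bigr => a _.
by rewrite -mulr_sumr trans_sum1 mulr1.
Qed.

Unset Implicit Arguments.

Theorem lemma10 (R : realType) (K : nat) (N : 'I_K -> nat) (X U : finType)
  (MR LR LP : R) (r : rewT R K X U) (P : transT R K X U)
  (pi : nat -> polT R K X U) (p0 : sconf N X -> R) :
  (0 < K)%N -> (forall k, (0 < N k)%N) ->
  0 < MR -> 0 < LR -> 0 < LP ->
  (forall k x u (mu : X -> 'I_K -> R) (nu : U -> 'I_K -> R),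
      is_distK mu -> is_distK nu -> `|r k x u mu nu| <= MR) ->
  (forall k x u (mu1 mu2 : X -> 'I_K -> R) (nu1 nu2 : U -> 'I_K -> R),
      is_distK mu1 -> is_distK mu2 -> is_distK nu1 -> is_distK nu2 ->
      `|r k x u mu1 nu1 - r k x u mu2 nu2| <= LR * (l1K mu1 mu2 + l1K nu1 nu2)) ->
  (forall k x u (mu : X -> 'I_K -> R) (nu : U -> 'I_K -> R),
      is_distK mu -> is_distK nu -> is_dist (P k x u mu nu)) ->
  (forall k x u (mu1 mu2 : X -> 'I_K -> R) (nu1 nu2 : U -> 'I_K -> R),
      is_distK mu1 -> is_distK mu2 -> is_distK nu1 -> is_distK nu2 ->
      l1 (P k x u mu1 nu1) (P k x u mu2 nu2) <= LP * (l1K mu1 mu2 + l1K nu1 nu2)) ->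
  (forall t k x (mu : X -> 'I_K -> R), is_distK mu -> is_dist (pi t k x mu)) ->
  is_dist p0 ->
  forall t : nat,
  let Npop := (\sum_k N k)%N in
  let S : R := \sum_k (Num.sqrt (N k)%:R)^-1 in
  (* (a) *)
  \sum_s \sum_a law p0 pi P t s * actker (pi t) s a *
      l1K (emp a) (nuMF (emp s) (pi t))
    <= S * Num.sqrt (#|U|%:R)
  /\
  (* (b) *)
  \sum_s \sum_a law p0 pi P t s * actker (pi t) s a *
      `| (Npop%:R)^-1 * \sum_k \sum_(j < N k)
            r k (s (agt j)) (a (agt j)) (emp s) (emp a)
         - \sum_k ((N k)%:R / Npop%:R) * rMF r (emp s) (pi t) k |
    <= (MR + LR) * S * Num.sqrt (#|U|%:R)
  /\
  (* (c) *)
  \sum_s \sum_a \sum_s' law p0 pi P t s * actker (pi t) s a * transker P s a s' *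
      l1K (emp s') (PMF P (emp s) (pi t))
    <= (2 + K%:R * LP) * S * Num.sqrt ((#|X| * #|U|)%:R).
Proof.
move=> K_gt0 N_gt0 MR_gt0 LR_gt0 LP_gt0 r_bounded r_lipschitz P_dist P_lipschitz
  pi_dist p0_dist t Npop S.
have [law_ge0 law_sum1] := law_dist N_gt0 pi_dist P_dist p0_dist t.
split; [|split].
- under eq_bigr do (under eq_bigr do rewrite -mulrA; rewrite -mulr_sumr).
  apply: avg_le => // s.
  exact (actker_l1K_nuMF_le N_gt0 (pi_dist t) s).
- under eq_bigr do (under eq_bigr do rewrite -mulrA; rewrite -mulr_sumr).
  apply: avg_le => // s.
  exact (actker_reward_gap_le N_gt0 (pi_dist t) K_gt0 (ltW MR_gt0) (ltW LR_gt0)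
    r_bounded r_lipschitz s).
- under eq_bigr do (under eq_bigr do
    (under eq_bigr do rewrite -mulrA; rewrite -mulr_sumr -mulrA); rewrite -mulr_sumr).
  apply: avg_le => // s.
  exact (actker_transker_l1K_PMF_le N_gt0 (pi_dist t) K_gt0 (ltW LP_gt0)
    P_dist P_lipschitz s).
Qed.
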